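(* Let $B\ge 1$, $S\ge 1$, $r,\lambda_{BB},\lambda_{SS},\lambda_{BS}>0$, and let $V(k_b,k_s)$, for $k_b\in\{0,\dots,B\}$ and $k_s\in\{1,\dots,S\}$, be defined by the recursion in the context. Then for all $k_b\in\{0,\dots,B-1\}$ and $k_s\in\{1,\dots,S\}$, $$V(k_b,k_s)-V(k_b+1,k_s)\le V(0,1)-V(1,1).$$
   Context: For $k_b\in\{0,\dots,B\}$ and $k_s\in\{1,\dots,S\}$, set $V(B,k_s)=0$, and for $k_b\le B-1$ define recursively $$V(k_b,k_s)=\frac{\lambda_{BB}k_b(B-k_b)V(k_b+1,k_s)+\lambda_{SS}(k_s-1)(S-k_s)V(k_b,k_s+1)+\lambda_{BS}k_b(S-k_s)V(k_b,k_s+1)+\lambda_{BS}k_s(B-k_b)V(k_b+1,k_s)+\lambda_{BS}(B-k_b)}{r+\lambda_{BB}k_b(B-k_b)+\lambda_{SS}(k_s-1)(S-k_s)+\lambda_{BS}k_b(S-k_s)+\lambda_{BS}k_s(B-k_b)}$$ (terms with coefficient $S-k_s=0$ are absent when $k_s=S$). Interpretation: in a market with $B$ buyers and $S$ sellers where each buyer–seller pair meets at Poisson rate $\lambda_{BS}$, each buyer pair at rate $\lambda_{BB}$, each seller pair at rate $\lambda_{SS}$ (independently), and information that a fixed seller $s$ is guilty spreads whenever an informed player meets an uninformed one (with $s$ herself counted among the $k_s$ informed sellers, and $s$'s own meetings with other sellers not spreading it), $V(k_b,k_s)$ is the expected discounted ($e^{-rt}$) number of meetings of $s$ with buyers who are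 not yet informed, starting from $k_b$ informed buyers and $k_s$ informed sellers. *)

From mathcomp Require Import all_boot all_order all_algebra.
Set Implicit Arguments. Unset Strict Implicit. Unset Printing Implicit Defensive.
Import Order.TTheory GRing.Theory Num.Theory.
Local Open Scope ring_scope.

(* Values outside the domain are irrelevant:
   when ks = S, the terms involving V(kb, S+1) carry the coefficient
   (S - ks) = 0, i.e. they are absent, as in the paper. *)
Definition V_rec (R : realFieldType) (B S : nat) (r lBB lSS lBS : R)
    (V : nat -> nat -> R) : Prop :=
  (forall ks, (1 <= ks <= S)%N -> V B ks = 0) /\
  (forall kb ks, (kb < B)%N -> (1 <= ks <= S)%N ->
     V kb ks =
       (lBB * kb%:R * (B - kb)%:R * V kb.+1 ks
        + lSS * (ks - 1)%:R * (S - ks)%:R * V kb ks.+1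
        + lBS * kb%:R * (S - ks)%:R * V kb ks.+1
        + lBS * ks%:R * (B - kb)%:R * V kb.+1 ks
        + lBS * (B - kb)%:R)
       / (r + lBB * kb%:R * (B - kb)%:R
          + lSS * (ks - 1)%:R * (S - ks)%:R
          + lBS * kb%:R * (S - ks)%:R
          + lBS * ks%:R * (B - kb)%:R)).

From mathcomp Require Import all_boot all_order all_algebra.
From mathcomp Require Import lra ring.
Import Order.TTheory GRing.Theory Num.Theory.
Set Implicit Arguments. Unset Strict Implicit.
Local Open Scope ring_scope.

(* Write Db(kb,ks) = V(kb,ks) - V(kb+1,ks) and Ds(kb,ks) = V(kb,ks) - V(kb,ks+1).  We prove, by backward
   induction from the boundary row kb = B and, inside each row, from the
   last column ks = S, that at every state
     Db >= 0,  Ds >= 0,  Db(kb,ks+1) <= Db(kb,ks),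
     Ds(kb,ks+1) <= Ds(kb,ks),  Db(kb+1,ks) <= Db(kb,ks).
   Each of these five facts at (kb,ks) follows from the recursion written at
   the neighbouring states: multiplying by the (positive) total rate, the
   quantity becomes a nonnegative combination of facts already known at
   (kb+1, .) and (kb, ks+1).  The theorem then follows from the
   monotonicity of Db in ks and in kb. *)

(* The recursion at state (i, j), cleared of its denominator; [b] and [s]
   stand for the numbers of buyers and sellers.  In the one-step lemmas
   [vxy] is the value at (i + x, j + y). *)
Section OneStep.
Variables (R : realFieldType) (r lBB lSS lBS b s : R).

Definition buyer_rate (i j : nat) : R := (b - i%:R) * (lBB * i%:R + lBS * j%:R).
Definition seller_rate (i j : nat) : R := (s - j%:R) * (lSS * (j%:R - 1) + lBS * i%:R).
Definition gain (i : nat) : R := lBS * (b - i%:R).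
Definition total_rate (i j : nat) : R := r + buyer_rate i j + seller_rate i j.
Definition recursion_at (i j : nat) (v vb vs : R) : Prop :=
  total_rate i j * v = buyer_rate i j * vb + seller_rate i j * vs + gain i.

Ltac solve_step :=
  rewrite /recursion_at /total_rate /buyer_rate /seller_rate /gain -!natr1 => *; lra.

Lemma propagate_Db i j v00 v10 v01 v20 v11 :
  0 <= lBS ->
  recursion_at i j v00 v10 v01 -> recursion_at i.+1 j v10 v20 v11 ->
  0 <= buyer_rate i.+1 j * (v10 - v20) ->
  0 <= lBS * (s - j%:R) * (v10 - v11) ->
  0 <= seller_rate i j * (v01 - v11) ->
  0 <= total_rate i j * (v00 - v10).
Proof. solve_step. Qed.

Lemma propagate_Ds i j v00 v10 v01 v11 v02 :
  recursion_at i j v00 v10 v01 -> recursion_at i j.+1 v01 v11 v02 ->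
  0 <= lBS * (b - i%:R) * (v01 - v11) ->
  0 <= seller_rate i j.+1 * (v01 - v02) ->
  0 <= buyer_rate i j * (v10 - v11) ->
  0 <= total_rate i j * (v00 - v01).
Proof. solve_step. Qed.

Lemma propagate_cross i j v00 v10 v01 v11 v20 v21 v02 v12 :
  recursion_at i j v00 v10 v01 -> recursion_at i.+1 j v10 v20 v11 ->
  recursion_at i j.+1 v01 v11 v02 -> recursion_at i.+1 j.+1 v11 v21 v12 ->
  0 <= buyer_rate i.+1 j * ((v10 - v20) - (v11 - v21)) ->
  0 <= lBS * (s - j.+1%:R) * ((v10 - v11) - (v11 - v12)) ->
  0 <= lBS * (v10 - v11) ->
  0 <= seller_rate i j.+1 * ((v01 - v11) - (v02 - v12)) ->
  0 <= lBS * (v11 - v21) + lBS * (b - i%:R) * ((v01 - v11) - (v11 - v21)) ->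
  0 <= total_rate i j * ((v00 - v10) - (v01 - v11)).
Proof. solve_step. Qed.

Lemma propagate_convex_s i j v00 v10 v01 v11 v02 v12 v03 :
  recursion_at i j v00 v10 v01 -> recursion_at i j.+1 v01 v11 v02 ->
  recursion_at i j.+2 v02 v12 v03 ->
  0 <= lBS * (b - i%:R) * ((v01 - v11) - (v02 - v12)) ->
  0 <= seller_rate i j.+2 * ((v01 - v02) - (v02 - v03)) ->
  0 <= buyer_rate i j * ((v10 - v11) - (v11 - v12)) ->
  0 <= lSS * (v01 - v02) ->
  0 <= total_rate i j * ((v00 - v01) - (v01 - v02)).
Proof. solve_step. Qed.

Lemma propagate_convex_b i j v00 v10 v20 v30 v01 v11 v21 :
  recursion_at i j v00 v10 v01 -> recursion_at i.+1 j v10 v20 v11 ->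
  recursion_at i.+2 j v20 v30 v21 ->
  0 <= buyer_rate i.+2 j * ((v10 - v20) - (v20 - v30)) ->
  0 <= lBS * (s - j%:R) * ((v10 - v20) - (v11 - v21)) ->
  0 <= seller_rate i j * ((v01 - v11) - (v11 - v21)) ->
  0 <= lBB * (v10 - v20) ->
  0 <= total_rate i j * ((v00 - v10) - (v10 - v20)).
Proof. solve_step. Qed.
End OneStep.

Lemma guarded_mul_ge0 (R : numDomainType) (P : bool) (c d : R) :
  0 <= c -> (~~ P -> c = 0) -> (P -> 0 <= d) -> 0 <= c * d.
Proof.
case: P => hc hc0 hd; first exact: mulr_ge0 hc (hd isT).
by rewrite hc0 // mul0r.
Qed.

Lemma le_subr_ge0 (R : numDomainType) (x y : R) : x <= y -> 0 <= y - x.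
Proof. by rewrite subr_ge0. Qed.

Lemma downward_ind (P : nat -> Prop) (n : nat) :
  (forall k, (k <= n)%N -> ((k < n)%N -> P k.+1) -> P k) ->
  forall k, (k <= n)%N -> P k.
Proof.
move=> hstep k hk; rewrite -(subKn hk).
elim: (n - k)%N (leq_subr k n) => [|m IH] hm.
  by apply: hstep; rewrite subn0 // ltnn.
apply: hstep => [|_]; first exact: leq_subr.
by rewrite subnSK //; apply: IH; exact: ltnW.
Qed.

Section Model.
Variables (R : realFieldType) (B S : nat) (r lBB lSS lBS : R) (V : nat -> nat -> R).
Hypotheses (r_gt0 : 0 < r) (lBB_ge0 : 0 <= lBB) (lSS_ge0 : 0 <= lSS)
  (lBS_ge0 : 0 <= lBS) (hV : V_rec B S r lBB lSS lBS V).

Local Notation b := (B%:R : R).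
Local Notation s := (S%:R : R).
Local Notation rateB := (buyer_rate lBB lBS b).
Local Notation rateS := (seller_rate lSS lBS s).
Local Notation denom := (total_rate r lBB lSS lBS b s).
Local Notation recursion_at := (recursion_at r lBB lSS lBS b s).

Lemma nat_gap_ge0 m n : (m <= n)%N -> 0 <= n%:R - m%:R :> R.
Proof. by move=> h; rewrite subr_ge0 ler_nat. Qed.

Lemma rateB_ge0 i j : (i <= B)%N -> 0 <= rateB i j.
Proof.
move=> hi; apply: mulr_ge0; first exact: nat_gap_ge0.
by apply: addr_ge0; apply: mulr_ge0.
Qed.

Lemma rateS_ge0 i j : (0 < j <= S)%N -> 0 <= rateS i j.
Proof.
case/andP=> hj1 hjS; apply: mulr_ge0; first exact: nat_gap_ge0.
by apply: addr_ge0; apply: mulr_ge0 => //; exact: (nat_gap_ge0 hj1).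
Qed.

Lemma denom_gt0 i j : (i <= B)%N -> (0 < j <= S)%N -> 0 < denom i j.
Proof.
move=> hi hj; apply: (lt_le_trans r_gt0); rewrite /total_rate -addrA lerDl.
by apply: addr_ge0; [exact: rateB_ge0 | exact: rateS_ge0].
Qed.

Lemma denom_mul_ge0 i j x : (i <= B)%N -> (0 < j <= S)%N ->
  (0 <= denom i j * x) = (0 <= x).
Proof. by move=> hi hj; rewrite pmulr_rge0 // denom_gt0. Qed.

Lemma seller_gap_eq0 j : (j <= S)%N -> ~~ (j < S)%N -> s - j%:R = 0.
Proof. by move=> hjS; rewrite -leqNgt => hSj; rewrite (@anti_leq j S) ?hjS ?subrr. Qed.

Lemma V_recursion i j : (i < B)%N -> (0 < j <= S)%N ->
  recursion_at i j (V i j) (V i.+1 j) (V i j.+1).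
Proof.
move=> hi hj; have /andP[hj1 hjS] := hj.
have := hV.2 i j hi hj; rewrite !natrB ?(ltnW hi) //.
set den := (r + _ + _ + _ + _) => ->.
have den_eq : den = denom i j by rewrite /den /total_rate /buyer_rate /seller_rate; ring.
rewrite /recursion_at den_eq mulrC divfK; last by rewrite gt_eqF // denom_gt0 // ltnW.
by rewrite /buyer_rate /seller_rate /gain; ring.
Qed.

(* On the state space it is
   [V] itself, it satisfies the recursion on the whole state space including
   the row [B], and the vanishing rows beyond [B] make row [B] a trivial
   instance of the invariants below. *)
Definition W (i j : nat) : R := if (i < B)%N then V i j else 0.

Lemma W_out i j : (B <= i)%N -> W i j = 0.
Proof. by rewrite /W leqNgt => /negbTE ->. Qed.

Lemma W_V i j : (i <= B)%N -> (0 < j <= S)%N -> W i j = V i j.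
Proof.
rewrite leq_eqVlt => /orP[/eqP -> hj|hi _]; last by rewrite /W hi.
by rewrite W_out // hV.1.
Qed.

Lemma W_recursion i j : (i <= B)%N -> (0 < j <= S)%N ->
  recursion_at i j (W i j) (W i.+1 j) (W i j.+1).
Proof.
rewrite leq_eqVlt => /orP[/eqP -> hj|hi hj].
  by rewrite /recursion_at /gain !W_out // subrr !mulr0 !addr0.
have /andP[_ hjS] := hj; rewrite /recursion_at.
have -> : rateS i j * W i j.+1 = rateS i j * V i j.+1.
  case: (boolP (j < S)%N) => [ltjS|/(seller_gap_eq0 hjS) gap0].
    by rewrite W_V // ltnW.
  by rewrite /seller_rate gap0 !mul0r.
by rewrite !W_V ?(ltnW hi) //; exact: V_recursion.
Qed.

Lemma seller_gap_mul_ge0 j d : (j <= S)%N -> ((j < S)%N -> 0 <= d) ->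
  0 <= lBS * (s - j%:R) * d.
Proof.
move=> hjS; apply: guarded_mul_ge0; first exact: mulr_ge0 lBS_ge0 (nat_gap_ge0 hjS).
by move=> /(seller_gap_eq0 hjS) ->; rewrite mulr0.
Qed.

Lemma rateS_mul_ge0 i j d : (0 < j <= S)%N -> ((j < S)%N -> 0 <= d) ->
  0 <= rateS i j * d.
Proof.
move=> hj; have /andP[_ hjS] := hj.
apply: guarded_mul_ge0; first exact: rateS_ge0.
by move=> /(seller_gap_eq0 hjS); rewrite /seller_rate => ->; rewrite mul0r.
Qed.

(* Marginal effect on [W] of informing one more buyer, resp. one more seller. *)
Definition Db (i j : nat) : R := W i j - W i.+1 j.
Definition Ds (i j : nat) : R := W i j - W i j.+1.

(* The invariant proved at every state by backward induction: both marginal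
   effects are nonnegative and nonincreasing in each coordinate (the
   monotonicity of [Ds] in [kb] is the statement [Db i j.+1 <= Db i j]). *)
Record Inv (i j : nat) : Prop := {
  Db_ge0 : 0 <= Db i j;
  Ds_ge0 : (j < S)%N -> 0 <= Ds i j;
  Db_antitone_s : (j < S)%N -> Db i j.+1 <= Db i j;
  Ds_antitone_s : (j.+1 < S)%N -> Ds i j.+1 <= Ds i j;
  Db_antitone_b : Db i.+1 j <= Db i j }.

Lemma Inv_boundary j : Inv B j.
Proof. by split=> *; rewrite /Db /Ds !W_out ?subrr ?leqnSn ?leqW. Qed.

Section Step.
Variables (i j : nat).
Hypotheses (hi : (i < B)%N) (hj : (0 < j <= S)%N)
  (IHrow : forall k, (0 < k <= S)%N -> Inv i.+1 k)
  (IHcol : (j < S)%N -> Inv i j.+1).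

Let hiB : (i <= B)%N := ltnW hi.
Let hjS : (j <= S)%N := proj2 (andP hj).
Let rec_ij := W_recursion hiB hj.
Let rec_i1j := W_recursion hi hj.

Lemma step_Db_ge0 : 0 <= Db i j.
Proof.
rewrite -(denom_mul_ge0 _ hiB hj); apply: (propagate_Db lBS_ge0 rec_ij rec_i1j).
- exact: mulr_ge0 (rateB_ge0 _ hi) (Db_ge0 (IHrow hj)).
- exact: seller_gap_mul_ge0 hjS (Ds_ge0 (IHrow hj)).
- exact: rateS_mul_ge0 hj (fun ltjS => Db_ge0 (IHcol ltjS)).
Qed.

Lemma step_Ds_ge0 : (j < S)%N -> 0 <= Ds i j.
Proof.
move=> ltjS; have hj1 : (0 < j.+1 <= S)%N := ltjS.
rewrite -(denom_mul_ge0 _ hiB hj).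
apply: (propagate_Ds rec_ij (W_recursion hiB hj1)).
- exact: mulr_ge0 (mulr_ge0 lBS_ge0 (nat_gap_ge0 hiB)) (Db_ge0 (IHcol ltjS)).
- exact: rateS_mul_ge0 hj1 (Ds_ge0 (IHcol ltjS)).
- exact: mulr_ge0 (rateB_ge0 _ hiB) (Ds_ge0 (IHrow hj) ltjS).
Qed.

Lemma step_Db_antitone_s : (j < S)%N -> Db i j.+1 <= Db i j.
Proof.
move=> ltjS; have hj1 : (0 < j.+1 <= S)%N := ltjS.
rewrite -subr_ge0 -(denom_mul_ge0 _ hiB hj).
apply: (propagate_cross rec_ij rec_i1j (W_recursion hiB hj1) (W_recursion hi hj1)).
- exact: mulr_ge0 (rateB_ge0 _ hi) (le_subr_ge0 (Db_antitone_s (IHrow hj) ltjS)).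
- exact: seller_gap_mul_ge0 ltjS (fun lt => le_subr_ge0 (Ds_antitone_s (IHrow hj) lt)).
- exact: mulr_ge0 lBS_ge0 (Ds_ge0 (IHrow hj) ltjS).
- exact: rateS_mul_ge0 hj1 (fun lt => le_subr_ge0 (Db_antitone_s (IHcol ltjS) lt)).
- apply: addr_ge0; first exact: mulr_ge0 lBS_ge0 (Db_ge0 (IHrow hj1)).
  apply: mulr_ge0 (mulr_ge0 lBS_ge0 (nat_gap_ge0 hiB)) _.
  exact: le_subr_ge0 (Db_antitone_b (IHcol ltjS)).
Qed.

Lemma step_Ds_antitone_s : (j.+1 < S)%N -> Ds i j.+1 <= Ds i j.
Proof.
move=> ltj1S; have ltjS := ltnW ltj1S.
have hj1 : (0 < j.+1 <= S)%N := ltjS; have hj2 : (0 < j.+2 <= S)%N := ltj1S.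
rewrite -subr_ge0 -(denom_mul_ge0 _ hiB hj).
apply: (propagate_convex_s rec_ij (W_recursion hiB hj1) (W_recursion hiB hj2)).
- apply: mulr_ge0 (mulr_ge0 lBS_ge0 (nat_gap_ge0 hiB)) _.
  exact: le_subr_ge0 (Db_antitone_s (IHcol ltjS) ltj1S).
- exact: rateS_mul_ge0 hj2 (fun lt => le_subr_ge0 (Ds_antitone_s (IHcol ltjS) lt)).
- exact: mulr_ge0 (rateB_ge0 _ hiB) (le_subr_ge0 (Ds_antitone_s (IHrow hj) ltj1S)).
- exact: mulr_ge0 lSS_ge0 (Ds_ge0 (IHcol ltjS) ltj1S).
Qed.

(* Next to the boundary row [B] the claim reduces to [step_Db_ge0], since
   row [B] of [W] and the row after it vanish. *)
Lemma step_Db_antitone_b : Db i.+1 j <= Db i j.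
Proof.
have [lt|geB] := ltnP i.+1 B; last first.
  by rewrite {1}/Db (W_out _ geB) (W_out _ (leqW geB)) subr0 step_Db_ge0.
rewrite -subr_ge0 -(denom_mul_ge0 _ hiB hj).
apply: (propagate_convex_b rec_ij rec_i1j (W_recursion lt hj)).
- exact: mulr_ge0 (rateB_ge0 _ lt) (le_subr_ge0 (Db_antitone_b (IHrow hj))).
- exact: seller_gap_mul_ge0 hjS (fun lt' => le_subr_ge0 (Db_antitone_s (IHrow hj) lt')).
- exact: rateS_mul_ge0 hj (fun lt' => le_subr_ge0 (Db_antitone_b (IHcol lt'))).
- exact: mulr_ge0 lBB_ge0 (Db_ge0 (IHrow hj)).
Qed.

Lemma Inv_step : Inv i j.
Proof.
split; [exact: step_Db_ge0 | exact: step_Ds_ge0 | exact: step_Db_antitone_s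
       | exact: step_Ds_antitone_s | exact: step_Db_antitone_b].
Qed.
End Step.

Lemma Inv_row i : (i < B)%N -> (forall k, (0 < k <= S)%N -> Inv i.+1 k) ->
  forall j, (0 < j <= S)%N -> Inv i j.
Proof.
move=> hi IHrow j /andP[hj1 hjS]; move: j hjS hj1.
apply: (downward_ind (P := fun j => (0 < j)%N -> Inv i j)) => j hjS IHcol hj1.
by apply: Inv_step => // [|ltjS]; [rewrite hj1 | exact: IHcol].
Qed.

Lemma Inv_all i j : (i <= B)%N -> (0 < j <= S)%N -> Inv i j.
Proof.
move=> hiB; move: i hiB j; apply: (downward_ind (P := fun i => forall j, (0 < j <= S)%N -> Inv i j)).
move=> i hiB IHrow; have [hi|geBi] := ltnP i B; first exact: Inv_row hi (IHrow hi).
by rewrite (@anti_leq i B) ?hiB // => j _; exact: Inv_boundary.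
Qed.

Lemma Db_le_first_col i j : (i <= B)%N -> (0 < j <= S)%N -> Db i j <= Db i 1.
Proof.
move=> hiB; elim: j => [//|j IH] /andP[_ hjS].
have [->|hj] := posnP j; first exact: lexx.
have hj' : (0 < j <= S)%N by rewrite hj ltnW.
exact: le_trans (Db_antitone_s (Inv_all hiB hj') hjS) (IH hj').
Qed.

Lemma Db_le_origin i : (0 < S)%N -> (i <= B)%N -> Db i 1 <= Db 0 1.
Proof.
move=> hS; have h1 : (0 < 1 <= S)%N by rewrite hS.
elim: i => [//|i IH] hiB.
exact: le_trans (Db_antitone_b (Inv_all (ltnW hiB) h1)) (IH (ltnW hiB)).
Qed.

Lemma Db_V i j : (i < B)%N -> (0 < j <= S)%N -> Db i j = V i j - V i.+1 j.
Proof. by move=> hi hj; rewrite /Db !W_V // ltnW. Qed.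
End Model.

Theorem mainTheorem3 (R : realFieldType) (B S : nat) (r lBB lSS lBS : R)
    (V : nat -> nat -> R) :
  (1 <= B)%N -> (1 <= S)%N ->
  0 < r -> 0 < lBB -> 0 < lSS -> 0 < lBS ->
  V_rec B S r lBB lSS lBS V ->
  forall kb ks, (kb < B)%N -> (1 <= ks <= S)%N ->
    V kb ks - V kb.+1 ks <= V 0%N 1%N - V 1%N 1%N.
Proof.
move=> hB hS hr /ltW hbb /ltW hss /ltW hbs hV kb ks hkb hks.
have h01 : (0 < 1 <= S)%N by rewrite hS.
rewrite -(Db_V hV hkb hks) -(Db_V hV hB h01).
apply: le_trans (Db_le_first_col hr hbb hss hbs hV (ltnW hkb) hks) _.
exact: (Db_le_origin hr hbb hss hbs hV hS (ltnW hkb)).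
Qed.
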